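(* Let $\Phi:(X,d^X,\mu,T)\to(Y,d^Y,\nu,S)$ be a Borel factor map of compact model p.-p. systems, and let $\varepsilon>0$. Then there is $L<\infty$ such that for all sufficiently large $N\in\mathbb{N}$ there is a compact subset $X_0\subseteq X$ with $\mu(X_0)>1-\varepsilon$ such that $\Phi|_{X_0}$ is continuous and is $(\varepsilon N)$-almost $L$-Lipschitz both as a map $(X_0,d^{\mathbf{X}}_{[-N;0)})\to(Y,d^{\mathbf{Y}}_{[-N;0)})$ and as a map $(X_0,d^{\mathbf{X}}_{[0;N)})\to(Y,d^{\mathbf{Y}}_{[0;N)})$.
   Context: Compact model p.-p. system $(X,d^X,\mu,T)$: compact metric space, homeomorphism $T$, $T$-invariant Borel probability $\mu$. $d^{\mathbf{X}}_F(x,x')=\sum_{n\in F}d^X(T^nx,T^nx')$ for finite $F\subseteq\mathbb{Z}$. A Borel factor map is a Borel $\Phi$ with $\Phi\circ T=S\circ\Phi$ $\mu$-a.e. and $\Phi_*\mu=\nu$. A map $f$ between (pseudo)metric spaces is $c$-almost $L$-Lipschitz if $d(f(x),f(x'))\le Ld(x,x')+c$ for all $x,x'$. *)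

From Stdlib Require Import Reals.
Open Scope R_scope.

Section Defs.

Context {X : Type}.

Definition is_metric (d : X -> X -> R) : Prop :=
  (forall x y, 0 <= d x y) /\
  (forall x y, d x y = 0 <-> x = y) /\
  (forall x y, d x y = d y x) /\
  (forall x y z, d x z <= d x y + d y z).

Definition is_open (d : X -> X -> R) (U : X -> Prop) : Prop :=
  forall x, U x -> exists r, 0 < r /\ forall y, d x y < r -> U y.

Definition is_compact (d : X -> X -> R) (K : X -> Prop) : Prop :=
  forall (I : Type) (U : I -> X -> Prop),
    (forall i, is_open d (U i)) ->
    (forall x, K x -> exists i, U i x) ->
    exists l : list I, forall x, K x -> exists i, List.In i l /\ U i x.

Definition compact_space (d : X -> X -> R) : Prop :=
  is_compact d (fun _ => True).

Definition sigma_algebra (F : (X -> Prop) -> Prop) : Prop :=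
  F (fun _ => True) /\
  (forall A, F A -> F (fun x => ~ A x)) /\
  (forall A : nat -> X -> Prop, (forall n, F (A n)) ->
     F (fun x => exists n, A n x)).

Definition borel (d : X -> X -> R) (A : X -> Prop) : Prop :=
  forall F, sigma_algebra F -> (forall U, is_open d U -> F U) -> F A.

(* mu is a Borel probability measure (its values off Borel sets are irrelevant). *)
Definition borel_prob (d : X -> X -> R) (mu : (X -> Prop) -> R) : Prop :=
  (forall A, borel d A -> 0 <= mu A) /\
  mu (fun _ => True) = 1 /\
  (forall A : nat -> X -> Prop,
     (forall n, borel d (A n)) ->
     (forall n m x, n <> m -> A n x -> A m x -> False) ->
     infinite_sum (fun n => mu (A n)) (mu (fun x => exists n, A n x))).

End Defs.

Definition continuous_on {X Y : Type} (dX : X -> X -> R) (dY : Y -> Y -> R)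
  (f : X -> Y) (K : X -> Prop) : Prop :=
  forall x, K x -> forall eps, 0 < eps -> exists delta, 0 < delta /\
    forall y, K y -> dX x y < delta -> dY (f x) (f y) < eps.

Definition is_homeo {X : Type} (d : X -> X -> R) (T Tinv : X -> X) : Prop :=
  continuous_on d d T (fun _ => True) /\
  continuous_on d d Tinv (fun _ => True) /\
  (forall x, Tinv (T x) = x) /\ (forall x, T (Tinv x) = x).

Definition cmpp_system {X : Type} (d : X -> X -> R) (mu : (X -> Prop) -> R)
  (T Tinv : X -> X) : Prop :=
  is_metric d /\ compact_space d /\ is_homeo d T Tinv /\ borel_prob d mu /\
  (forall A, borel d A -> mu (fun x => A (T x)) = mu A).

Definition borel_measurable {X Y : Type} (dX : X -> X -> R) (dY : Y -> Y -> R)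
  (f : X -> Y) : Prop :=
  forall B, borel dY B -> borel dX (fun x => B (f x)).

Definition borel_factor_map {X Y : Type} (dX : X -> X -> R) (mu : (X -> Prop) -> R)
  (T : X -> X) (dY : Y -> Y -> R) (nu : (Y -> Prop) -> R) (S : Y -> Y)
  (Phi : X -> Y) : Prop :=
  borel_measurable dX dY Phi /\
  (exists Z, borel dX Z /\ mu Z = 0 /\
     forall x, ~ Z x -> Phi (T x) = S (Phi x)) /\
  (forall B, borel dY B -> mu (fun x => B (Phi x)) = nu B).

Fixpoint sumR (n : nat) (g : nat -> R) : R :=
  match n with O => 0 | S k => sumR k g + g k end.

Definition d_future {X : Type} (d : X -> X -> R) (T : X -> X) (N : nat)
  (x x' : X) : R :=
  sumR N (fun k => d (Nat.iter k T x) (Nat.iter k T x')).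

(* d_{[-N;0)}(x,x') = sum_{n=-N}^{-1} d(T^n x, T^n x') = sum_{k=1}^{N} d(T^{-k} x, T^{-k} x') *)
Definition d_past {X : Type} (d : X -> X -> R) (Tinv : X -> X) (N : nat)
  (x x' : X) : R :=
  sumR N (fun k => d (Nat.iter (S k) Tinv x) (Nat.iter (S k) Tinv x')).

Definition almost_lipschitz_on {X Y : Type} (dX : X -> X -> R) (dY : Y -> Y -> R)
  (f : X -> Y) (K : X -> Prop) (c L : R) : Prop :=
  forall x x', K x -> K x' -> dY (f x) (f x') <= L * dX x x' + c.

(* By Lusin's theorem, [Phi] is uniformly continuous on a closed set [K] of measure close
   to 1; off [K] its increments are at most the diameter [D] of [Y].  Hence each term
   [dY (Phi (T^k x)) (Phi (T^k x'))] is at most [(D / eta) dX (T^k x) (T^k x') + eps / 4],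
   plus [D] for each of [x], [x'] whose iterate leaves [K].  Since [T] preserves [mu],
   Markov's inequality bounds the measure of the points whose first [N] forward (or
   backward) iterates leave [K] more than [eps N / (4 D)] times by [4 D mu(X \ K) / eps].
   On the remaining points, which also avoid the null set where [Phi] fails to intertwine
   [T] and [S], the orbit sums of [dY] become the [N]-step distances of the images, and a
   closed (hence compact) subset of this good set of nearly full measure does the job. *)

From Stdlib Require Import Reals Lra Lia List.
From Stdlib Require Import Classical ClassicalEpsilon FunctionalExtensionality PropExtensionality.
Open Scope R_scope.

Lemma pred_ext {X : Type} (A B : X -> Prop) : (forall x, A x <-> B x) -> A = B.
Proof.
  intro H; apply functional_extensionality; intro x; apply propositional_extensionality; auto.
Qed.

Lemma set_fun_ext {X : Type} (m : (X -> Prop) -> R) (A B : X -> Prop) :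
  (forall x, A x <-> B x) -> m A = m B.
Proof. intro H; now rewrite (pred_ext A B H). Qed.

Lemma exists_le_0 (P : nat -> Prop) : (exists k, (k <= 0)%nat /\ P k) <-> P O.
Proof.
  split; [intros [k [Hk H]]; replace k with O in H by lia; auto | exists O; auto].
Qed.

Lemma exists_le_S (P : nat -> Prop) n :
  (exists k, (k <= S n)%nat /\ P k) <-> (exists k, (k <= n)%nat /\ P k) \/ P (S n).
Proof.
  split.
  - intros [k [Hk H]]; destruct (Nat.eq_dec k (S n)) as [->|]; auto.
    left; exists k; split; [lia | auto].
  - intros [[k [Hk H]] | H]; [exists k | exists (S n)]; split; auto; lia.
Qed.

Section Borel.
Context {X : Type} {d : X -> X -> R}.

Lemma borel_open U : is_open d U -> borel d U.
Proof. intros HU F _ Ho; auto. Qed.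

Lemma borel_True : borel d (fun _ => True).
Proof. intros F HF _; apply HF. Qed.

Lemma borel_complement A : borel d A -> borel d (fun x => ~ A x).
Proof. intros HA F HF Ho; apply HF, HA; auto. Qed.

Lemma borel_countable_union (A : nat -> X -> Prop) :
  (forall n, borel d (A n)) -> borel d (fun x => exists n, A n x).
Proof. intros HA F HF Ho; apply HF; intro n; apply HA; auto. Qed.

Lemma borel_False : borel d (fun _ => False).
Proof.
  rewrite (pred_ext (fun _ : X => False) (fun _ => ~ True)) by (intro; tauto).
  apply borel_complement, borel_True.
Qed.

Lemma borel_complement_inv A : borel d (fun x => ~ A x) -> borel d A.
Proof.
  intro H; rewrite (pred_ext A (fun x => ~ ~ A x)) by (intro; tauto).
  now apply borel_complement.
Qed.

Lemma borel_union A B : borel d A -> borel d B -> borel d (fun x => A x \/ B x).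
Proof.
  intros HA HB.
  rewrite (pred_ext _ (fun x => exists n, (match n with O => A | _ => B end) x)).
  - apply borel_countable_union; intros [|n]; auto.
  - intro x; split.
    + intros [H|H]; [exists O | exists 1%nat]; auto.
    + intros [[|n] H]; auto.
Qed.

Lemma borel_inter A B : borel d A -> borel d B -> borel d (fun x => A x /\ B x).
Proof.
  intros HA HB; rewrite (pred_ext _ (fun x => ~ (~ A x \/ ~ B x))) by (intro; tauto).
  apply borel_complement, borel_union; now apply borel_complement.
Qed.

Lemma borel_countable_inter (A : nat -> X -> Prop) :
  (forall n, borel d (A n)) -> borel d (fun x => forall n, A n x).
Proof.
  intro HA; rewrite (pred_ext _ (fun x => ~ exists n, ~ A n x)).
  - apply borel_complement, borel_countable_union; intro; now apply borel_complement.
  - intro x; split; [intros H [n Hn]; auto | intros H n; apply NNPP; eauto].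
Qed.

End Borel.

Ltac solve_borel :=
  solve [repeat first
    [ solve [eauto]
    | apply borel_True | apply borel_False
    | apply borel_inter | apply borel_union | apply borel_complement
    | apply borel_countable_union; intro | apply borel_countable_inter; intro ]].

Section Measure.
Context {X : Type} {d : X -> X -> R} {mu : (X -> Prop) -> R} (Hmu : borel_prob d mu).

Lemma measure_nonneg A : borel d A -> 0 <= mu A.
Proof. apply Hmu. Qed.

Lemma measure_full : mu (fun _ => True) = 1.
Proof. apply Hmu. Qed.

Lemma measure_empty : mu (fun _ => False) = 0.
Proof.
  (* [mu(empty)] is the sum of the constant series [mu(empty) + mu(empty) + ...] *)
  destruct Hmu as [_ [_ Hsum]].
  specialize (Hsum (fun _ _ => False) (fun _ => borel_False) (fun _ _ _ _ h _ => h)).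
  rewrite (set_fun_ext mu _ (fun _ => False)) in Hsum by (intro; split; [intros [_ []] | tauto]).
  set (c := mu (fun _ => False)) in *.
  destruct (Req_dec c 0) as [|Hc]; auto; exfalso.
  apply Rabs_pos_lt in Hc.
  destruct (Hsum (Rabs c / 2)) as [N HN]; [lra|].
  specialize (HN (S N) (Nat.le_succ_diag_r N)); unfold Rdist in HN.
  rewrite sum_cte in HN.
  replace (c * INR (S (S N)) - c) with (INR (S N) * c) in HN by (rewrite (S_INR (S N)); ring).
  rewrite Rabs_mult, Rabs_right in HN by (apply Rle_ge, pos_INR).
  assert (1 <= INR (S N)) by (rewrite S_INR; pose proof (pos_INR N); lra).
  nra.
Qed.

Lemma measure_union_disjoint A B : borel d A -> borel d B ->
  (forall x, A x -> B x -> False) -> mu (fun x => A x \/ B x) = mu A + mu B.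
Proof.
  intros HA HB Hdis; destruct Hmu as [_ [_ Hsum]].
  set (C := fun n : nat => match n with O => A | 1%nat => B | _ => fun _ => False end).
  specialize (Hsum C).
  rewrite (set_fun_ext mu _ (fun x => A x \/ B x)) in Hsum.
  - apply (uniqueness_sum (fun n => mu (C n))).
    + apply Hsum; [intros [|[|n]]; simpl; solve_borel|].
      intros [|[|n]] [|[|m]] x Hnm; simpl; try tauto; try lia; eauto.
    + intros e He; exists 1%nat; intros n Hn.
      replace (sum_f_R0 (fun n => mu (C n)) n) with (mu A + mu B).
      { unfold Rdist; rewrite Rminus_diag, Rabs_R0; lra. }
      induction n as [|[|n] IH]; [lia | simpl; ring |].
      rewrite tech5, <- IH by lia; simpl; rewrite measure_empty; ring.
  - intro x; split.
    + intros [[|[|n]] H]; simpl in H; tauto.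
    + intros [H|H]; [exists O | exists 1%nat]; auto.
Qed.

Lemma measure_split A C : borel d A -> borel d C ->
  mu A = mu (fun x => A x /\ C x) + mu (fun x => A x /\ ~ C x).
Proof.
  intros HA HC; rewrite <- measure_union_disjoint by (solve_borel || firstorder).
  apply set_fun_ext; intro x; destruct (classic (C x)); tauto.
Qed.

Lemma measure_mono A B : borel d A -> borel d B -> (forall x, A x -> B x) -> mu A <= mu B.
Proof.
  intros HA HB H; rewrite (measure_split B A HB HA).
  rewrite (set_fun_ext mu (fun x => B x /\ A x) A) by firstorder.
  pose proof (measure_nonneg (fun x => B x /\ ~ A x) ltac:(solve_borel)); lra.
Qed.

Lemma measure_diff A B : borel d A -> borel d B -> (forall x, B x -> A x) ->
  mu (fun x => A x /\ ~ B x) = mu A - mu B.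
Proof.
  intros HA HB H; rewrite (measure_split A B HA HB).
  rewrite (set_fun_ext mu (fun x => A x /\ B x) B) by firstorder; ring.
Qed.

Lemma measure_complement A : borel d A -> mu (fun x => ~ A x) = 1 - mu A.
Proof.
  intro HA; rewrite <- measure_full, <- measure_diff by (solve_borel || firstorder).
  apply set_fun_ext; tauto.
Qed.

Lemma measure_union_le A B : borel d A -> borel d B -> mu (fun x => A x \/ B x) <= mu A + mu B.
Proof.
  intros HA HB.
  rewrite (set_fun_ext mu _ (fun x => A x \/ (B x /\ ~ A x)))
    by (intro x; destruct (classic (A x)); tauto).
  rewrite measure_union_disjoint by (solve_borel || firstorder).
  pose proof (measure_mono (fun x => B x /\ ~ A x) B ltac:(solve_borel) HB ltac:(firstorder)); lra.
Qed.

Lemma measure_not_and_le A B : borel d A -> borel d B ->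
  mu (fun x => ~ (A x /\ B x)) <= mu (fun x => ~ A x) + mu (fun x => ~ B x).
Proof.
  intros HA HB; rewrite (set_fun_ext mu _ (fun x => ~ A x \/ ~ B x)) by (intro; tauto).
  apply measure_union_le; solve_borel.
Qed.

End Measure.

Section MeasureLimits.
Context {X : Type} {d : X -> X -> R} {mu : (X -> Prop) -> R} (Hmu : borel_prob d mu).

Lemma measure_increasing_union (C : nat -> X -> Prop) :
  (forall n, borel d (C n)) -> (forall n x, C n x -> C (S n) x) ->
  forall g, 0 < g -> exists M, mu (fun x => exists n, C n x) - g < mu (C M).
Proof.
  intros HC Hinc g Hg.
  assert (Hmon : forall n m x, (n <= m)%nat -> C n x -> C m x)
    by (intros n m x Hnm; induction Hnm; auto).
  set (D := fun n : nat => match n with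
                           | O => C O
                           | S k => fun x => C (S k) x /\ ~ C k x end).
  assert (HD : forall n, borel d (D n)) by (intros [|k]; simpl; solve_borel).
  assert (Hpart : forall n, sum_f_R0 (fun n => mu (D n)) n = mu (C n)).
  { induction n as [|n IH]; simpl; auto.
    rewrite IH, (measure_split Hmu (C (S n)) (C n)) by auto.
    rewrite (set_fun_ext mu (fun x => C (S n) x /\ C n x) (C n)) by firstorder; ring. }
  destruct Hmu as [_ [_ Hsum]].
  destruct (Hsum D HD) with (eps := g) as [M HM]; auto.
  - enough (H : forall n m x, (n < m)%nat -> D n x -> D m x -> False).
    { intros n m x Hnm; destruct (Nat.lt_total n m) as [|[|]]; eauto; contradiction. }
    intros n [|m] x Hnm; [lia|]; intros Hn [_ Hm]; apply Hm, (Hmon n); [lia|].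
    destruct n; apply Hn.
  - exists M; specialize (HM M (le_n _)); unfold Rdist in HM; rewrite Hpart in HM.
    rewrite (set_fun_ext mu _ (fun x => exists n, D n x)).
    + apply Rabs_def2 in HM; lra.
    + intro x; split; [intros [n Hn] | intros [[|n] Hn]; eexists; apply Hn].
      induction n as [|n IH]; [now exists O|].
      destruct (classic (C n x)); [auto | now exists (S n)].
Qed.

Lemma measure_union_geometric_le (B : nat -> X -> Prop) g : (forall n, borel d (B n)) ->
  (forall n, mu (B n) <= g / 2 ^ S n) -> mu (fun x => exists n, B n x) <= g.
Proof.
  intros HB Hb.
  set (C := fun n x => exists k, (k <= n)%nat /\ B k x).
  assert (HC0 : C O = B O) by (apply pred_ext; intro; apply exists_le_0).
  assert (HCS : forall n, C (S n) = fun x => C n x \/ B (S n) x)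
    by (intro; apply pred_ext; intro; apply exists_le_S).
  assert (HC : forall n, borel d (C n))
    by (induction n; [rewrite HC0 | rewrite HCS]; solve_borel).
  assert (Hc : forall n, mu (C n) <= g - g / 2 ^ S n).
  { induction n as [|n IH].
    - rewrite HC0; specialize (Hb O); simpl in *; lra.
    - rewrite HCS; pose proof (measure_union_le Hmu _ _ (HC n) (HB (S n))).
      specialize (Hb (S n)); replace (g / 2 ^ S (S n)) with (g / 2 ^ S n / 2) in *
        by (simpl; field; apply pow_nonzero; lra).
      lra. }
  apply Rnot_lt_le; intro Hlt.
  destruct (measure_increasing_union C HC) with (g := mu (fun x => exists n, B n x) - g)
    as [M HM].
  - intros n x; rewrite HCS; auto.
  - lra.
  - rewrite (set_fun_ext mu _ (fun x => exists n, B n x)) in HM.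
    + specialize (Hc M).
      assert (0 <= g / 2 ^ S M); [|lra].
      pose proof (measure_nonneg Hmu _ (HB O)); specialize (Hb O); simpl in Hb.
      apply Rle_mult_inv_pos; [|apply pow_lt]; lra.
    + unfold C; intro x; split; [intros [n [k [_ H]]]; now exists k|].
      intros [n H]; exists n, n; auto.
Qed.

Lemma measure_null_union (B : nat -> X -> Prop) : (forall n, borel d (B n)) ->
  (forall n, mu (B n) = 0) -> mu (fun x => exists n, B n x) = 0.
Proof.
  intros HB H0; apply Rle_antisym; [|apply (measure_nonneg Hmu); solve_borel].
  apply Rnot_lt_le; intro Hlt.
  enough (mu (fun x => exists n, B n x) <= mu (fun x => exists n, B n x) / 2) by lra.
  apply measure_union_geometric_le; auto.
  intro n; rewrite H0; apply Rlt_le, Rdiv_lt_0_compat; [lra | apply pow_lt; lra].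
Qed.

End MeasureLimits.

Definition is_closed {X : Type} (d : X -> X -> R) (C : X -> Prop) : Prop :=
  is_open d (fun x => ~ C x).

Lemma closed_borel {X : Type} (d : X -> X -> R) C : is_closed d C -> borel d C.
Proof. intro H; now apply borel_complement_inv, borel_open. Qed.

Section Metric.
Context {X : Type} {d : X -> X -> R} (Hd : is_metric d).

Lemma dist_nonneg x y : 0 <= d x y.
Proof. apply Hd. Qed.

Lemma dist_refl x : d x x = 0.
Proof. now apply Hd. Qed.

Lemma dist_sym x y : d x y = d y x.
Proof. apply Hd. Qed.

Lemma dist_triangle x y z : d x z <= d x y + d y z.
Proof. apply Hd. Qed.

Lemma open_ball x r : is_open d (fun y => d x y < r).
Proof.
  intros y Hy; exists (r - d x y); split; [lra|].
  intros z Hz; pose proof (dist_triangle x y z); lra.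
Qed.

Lemma closed_forall (I : Type) (F : I -> X -> Prop) :
  (forall i, is_closed d (F i)) -> is_closed d (fun x => forall i, F i x).
Proof.
  intros H x Hx; apply not_all_ex_not in Hx; destruct Hx as [i Hi].
  destruct (H i x Hi) as [r [Hr Hball]]; exists r; split; auto.
  intros y Hy Hall; exact (Hball y Hy (Hall i)).
Qed.

Lemma closed_union C D : is_closed d C -> is_closed d D -> is_closed d (fun x => C x \/ D x).
Proof.
  intros HC HD x Hx.
  destruct (HC x ltac:(tauto)) as [r1 [H1 B1]], (HD x ltac:(tauto)) as [r2 [H2 B2]].
  exists (Rmin r1 r2); split; [now apply Rmin_glb_lt|].
  pose proof (Rmin_l r1 r2); pose proof (Rmin_r r1 r2).
  intros y Hy [h|h]; [apply (B1 y) | apply (B2 y)]; auto; lra.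
Qed.

Lemma closed_finite_union (F : nat -> X -> Prop) n : (forall k, is_closed d (F k)) ->
  is_closed d (fun x => exists k, (k <= n)%nat /\ F k x).
Proof.
  intro HF; induction n.
  - rewrite (pred_ext _ (F O)); [auto | intro; apply exists_le_0].
  - rewrite (pred_ext _ (fun x => (exists k, (k <= n)%nat /\ F k x) \/ F (S n) x)).
    + now apply closed_union.
    + intro; apply exists_le_S.
Qed.

Lemma compact_closed C : compact_space d -> is_closed d C -> is_compact d C.
Proof.
  intros Hc HC I U HU Hcov.
  destruct (Hc (option I) (fun o x => match o with None => ~ C x | Some i => U i x end))
    as [l Hl].
  - intros [i|]; auto.
  - intros x _; destruct (classic (C x)) as [h|h]; [|now exists None].
    destruct (Hcov x h) as [i Hi]; now exists (Some i).
  - exists (flat_map (fun o => match o with Some i => i :: nil | None => nil end) l).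
    intros x Hx; destruct (Hl x Logic.I) as [[i|] [Hin Hi]]; [|tauto].
    exists i; split; auto; apply in_flat_map; exists (Some i); simpl; auto.
Qed.

End Metric.

Definition closed_approx {X : Type} (d : X -> X -> R) (mu : (X -> Prop) -> R)
  (A : X -> Prop) : Prop :=
  forall g, 0 < g -> exists F, is_closed d F /\ (forall x, F x -> A x) /\
    mu (fun x => A x /\ ~ F x) < g.

Definition closed_regular {X : Type} (d : X -> X -> R) (mu : (X -> Prop) -> R)
  (A : X -> Prop) : Prop :=
  borel d A /\ closed_approx d mu A /\ closed_approx d mu (fun x => ~ A x).

Section Regularity.
Context {X : Type} {d : X -> X -> R} (Hd : is_metric d)
  {mu : (X -> Prop) -> R} (Hmu : borel_prob d mu).

Lemma closed_approx_closed C : is_closed d C -> closed_approx d mu C.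
Proof.
  intros HC g Hg; exists C; repeat split; auto.
  rewrite (set_fun_ext mu _ (fun _ => False)) by firstorder.
  now rewrite (measure_empty Hmu).
Qed.

Lemma closed_approx_open U : is_open d U -> closed_approx d mu U.
Proof.
  intros HU g Hg.
  set (r := fun k : nat => / INR (S k)).
  assert (Hr : forall k, 0 < r k) by (intro; apply Rinv_0_lt_compat, lt_0_INR; lia).
  set (C := fun k x => forall y, d x y < r k -> U y).
  assert (HCc : forall k, is_closed d (C k)).
  { intros k x Hx; apply not_all_ex_not in Hx; destruct Hx as [y Hy].
    apply imply_to_and in Hy; destruct Hy as [Hxy HUy].
    exists (r k - d x y); split; [lra|]; intros z Hz HCz; apply HUy, HCz.
    pose proof (dist_triangle Hd z x y); rewrite (dist_sym Hd z x) in *; lra. }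
  assert (HCU : forall k x, C k x -> U x)
    by (intros k x H; apply H; rewrite (dist_refl Hd); apply Hr).
  assert (HCinc : forall k x, C k x -> C (S k) x).
  { intros k x H y Hy; apply H; eapply Rlt_le_trans; [exact Hy|].
    apply Rinv_le_contravar; [apply lt_0_INR; lia | apply le_INR; lia]. }
  assert (HCunion : (fun x => exists k, C k x) = U).
  { apply pred_ext; intro x; split; [intros [k Hk]; eauto|intro Hx].
    destruct (HU x Hx) as [s [Hs Hball]], (INR_unbounded (/ s)) as [k Hk].
    exists k; intros y Hy; apply Hball; eapply Rlt_trans; [exact Hy|].
    rewrite <- (Rinv_inv s); apply Rinv_lt_contravar.
    - apply Rmult_lt_0_compat; [apply Rinv_0_lt_compat | apply lt_0_INR; lia]; auto.
    - rewrite S_INR; lra. }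
  destruct (measure_increasing_union Hmu C (fun k => closed_borel d _ (HCc k)) HCinc g Hg)
    as [M HM].
  exists (C M); split; [auto | split; [apply HCU|]].
  rewrite (measure_diff Hmu), <- HCunion; [lra | .. | apply HCU].
  - apply borel_open, HU.
  - apply closed_borel, HCc.
Qed.

Lemma closed_approx_union (A : nat -> X -> Prop) : (forall n, borel d (A n)) ->
  (forall n, closed_approx d mu (A n)) -> closed_approx d mu (fun x => exists n, A n x).
Proof.
  intros HA Happ g Hg.
  destruct (choice (fun n F => is_closed d F /\ (forall x, F x -> A n x) /\
              mu (fun x => A n x /\ ~ F x) < g / 2 / 2 ^ S n)) as [F HF].
  { intro n; apply Happ, Rdiv_lt_0_compat; [lra | apply pow_lt; lra]. }
  assert (HFb : forall n, borel d (F n)) by (intro; apply closed_borel, HF).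
  set (C := fun n x => exists k, (k <= n)%nat /\ F k x).
  assert (HCc : forall n, is_closed d (C n)) by (intro; apply closed_finite_union, HF).
  assert (HCS : forall n x, C n x -> C (S n) x)
    by (intros n x Hx; apply exists_le_S; auto).
  destruct (measure_increasing_union Hmu C (fun n => closed_borel d _ (HCc n)))
    with (g := g / 2) as [M HM]; auto; [lra|].
  rewrite (set_fun_ext mu _ (fun x => exists n, F n x)) in HM
    by (intro x; split; [intros [n [k [_ H]]]; eauto | intros [n H]; exists n, n; auto]).
  assert (HCA : forall x, C M x -> exists n, A n x)
    by (intros x [k [_ H]]; exists k; apply HF, H).
  exists (C M); split; auto; split; auto.
  assert (Hlost : mu (fun x => (exists n, A n x) /\ ~ exists n, F n x) <= g / 2).
  { eapply Rle_trans; [|apply (measure_union_geometric_le Hmu (fun n x => A n x /\ ~ F n x))].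
    - apply (measure_mono Hmu); [solve_borel | solve_borel | firstorder].
    - intro; solve_borel.
    - intro n; apply Rlt_le, HF. }
  rewrite (measure_diff Hmu) by (solve_borel || apply closed_borel, HCc || auto).
  rewrite (measure_split Hmu (fun x => exists n, A n x) (fun x => exists n, F n x))
    by solve_borel.
  pose proof (measure_mono Hmu (fun x => (exists n, A n x) /\ exists n, F n x)
                (fun x => exists n, F n x) ltac:(solve_borel) ltac:(solve_borel) ltac:(firstorder)).
  lra.
Qed.

Lemma closed_approx_inter (A : nat -> X -> Prop) : (forall n, borel d (A n)) ->
  (forall n, closed_approx d mu (A n)) -> closed_approx d mu (fun x => forall n, A n x).
Proof.
  intros HA Happ g Hg.
  destruct (choice (fun n F => is_closed d F /\ (forall x, F x -> A n x) /\
              mu (fun x => A n x /\ ~ F x) < g / 2 / 2 ^ S n)) as [F HF].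
  { intro n; apply Happ, Rdiv_lt_0_compat; [lra | apply pow_lt; lra]. }
  assert (HFb : forall n, borel d (F n)) by (intro; apply closed_borel, HF).
  exists (fun x => forall n, F n x); split; [apply closed_forall; intro; apply HF|].
  split; [intros x H n; apply HF, H|].
  apply (Rle_lt_trans _ (g / 2)); [|lra].
  eapply Rle_trans; [|apply (measure_union_geometric_le Hmu (fun n x => A n x /\ ~ F n x))].
  - apply (measure_mono Hmu); [solve_borel | solve_borel|].
    intros x [HAx HFx]; apply not_all_ex_not in HFx; destruct HFx as [n Hn]; eauto.
  - intro; solve_borel.
  - intro n; apply Rlt_le, HF.
Qed.

Lemma closed_regular_sigma : sigma_algebra (closed_regular d mu).
Proof.
  split; [|split].
  - repeat split; [apply borel_True | apply closed_approx_open | apply closed_approx_closed].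
    all: intros x _; exists 1; split; [lra | tauto].
  - intros A [HA [Happ Happc]]; repeat split; [solve_borel | exact Happc|].
    rewrite (pred_ext _ A); [exact Happ | intro; tauto].
  - intros A HA; repeat split.
    + apply borel_countable_union; intro; apply HA.
    + apply closed_approx_union; intro; apply HA.
    + rewrite (pred_ext _ (fun x => forall n, ~ A n x)) by (intro; firstorder).
      apply closed_approx_inter; intro n; [apply borel_complement|]; apply HA.
Qed.

Lemma closed_inner_regular A : borel d A -> closed_approx d mu A.
Proof.
  intro HA; apply (HA (closed_regular d mu) closed_regular_sigma).
  intros U HU; repeat split; [now apply borel_open | now apply closed_approx_open |].
  apply closed_approx_closed; unfold is_closed.
  rewrite (pred_ext _ U); [exact HU | intro; tauto].
Qed.

End Regularity.

Lemma finite_positive_lower_bound (l : list R) :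
  exists m, 0 < m /\ forall r, In r l -> 0 < r -> m <= r.
Proof.
  induction l as [|a l [m [Hm Hl]]]; [exists 1; split; [lra | intros r []]|].
  destruct (Rlt_le_dec 0 a) as [Ha|Ha].
  - exists (Rmin a m); split; [now apply Rmin_glb_lt|].
    intros r [<-|Hr] Hr0; [apply Rmin_l | eapply Rle_trans; [apply Rmin_r | auto]].
  - exists m; split; auto; intros r [<-|Hr] Hr0; [lra | auto].
Qed.

Section CompactMetric.
Context {X : Type} {d : X -> X -> R} (Hd : is_metric d) (Hc : compact_space d).

Lemma compact_finite_net r : 0 < r -> exists l : list X, forall y, exists z, In z l /\ d z y < r.
Proof.
  intro Hr; destruct (Hc X (fun z y => d z y < r)) as [l Hl].
  - intro z; apply (open_ball Hd).
  - intros x _; exists x; now rewrite (dist_refl Hd).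
  - exists l; intro y; destruct (Hl y Logic.I) as [z [H1 H2]]; eauto.
Qed.

Lemma compact_bounded : exists D, 0 < D /\ forall y y', d y y' <= D.
Proof.
  destruct (classic (exists x0 : X, True)) as [[x0 _]|Hempty];
    [|exists 1; split; [lra | intros y; exfalso; eauto]].
  destruct (Hc nat (fun n y => d x0 y < INR n)) as [l Hl].
  - intro n; apply (open_ball Hd).
  - intros y _; destruct (INR_unbounded (d x0 y)) as [n Hn]; exists n; lra.
  - exists (2 * INR (list_max l) + 1); split; [pose proof (pos_INR (list_max l)); lra|].
    assert (Hmax : forall y, d x0 y <= INR (list_max l)).
    { intro y; destruct (Hl y Logic.I) as [n [Hin Hn]].
      assert (Hle : (n <= list_max l)%nat)
        by (apply (proj1 (Forall_forall _ l) (proj1 (list_max_le l _) (le_n _))), Hin).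
      apply le_INR in Hle; lra. }
    intros y y'; pose proof (dist_triangle Hd y x0 y') as Htri.
    rewrite (dist_sym Hd y x0) in Htri; pose proof (Hmax y); pose proof (Hmax y'); lra.
Qed.

Lemma closed_disjoint_separated C1 C2 : is_closed d C1 -> is_closed d C2 ->
  (forall x, C1 x -> C2 x -> False) ->
  exists eta, 0 < eta /\ forall x x', C1 x -> C2 x' -> eta <= d x x'.
Proof.
  intros H1 H2 Hdis.
  (* [U (z, s)] is the ball [B(z, s)] if the double ball [B(z, 2s)] misses [C1] or [C2] *)
  set (U := fun (p : X * R) x => 0 < snd p /\
              ((forall y, d (fst p) y < 2 * snd p -> ~ C1 y) \/
               (forall y, d (fst p) y < 2 * snd p -> ~ C2 y)) /\ d (fst p) x < snd p).
  destruct (Hc (X * R)%type U) as [l Hl].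
  - intros p x [Hp [Hor Hx]]; exists (snd p - d (fst p) x); split; [lra|].
    intros y Hy; split; auto; split; auto; pose proof (dist_triangle Hd (fst p) x y); lra.
  - intros x _.
    assert (Hmiss : exists s, 0 < s /\ ((forall y, d x y < s -> ~ C1 y) \/
                                        (forall y, d x y < s -> ~ C2 y))).
    { destruct (classic (C1 x)) as [h|h].
      - destruct (H2 x (Hdis x h)) as [s [Hs Hb]]; exists s; split; auto.
      - destruct (H1 x h) as [s [Hs Hb]]; exists s; split; auto. }
    destruct Hmiss as [s [Hs Hor]]; exists (x, s / 2); unfold U; simpl.
    rewrite (dist_refl Hd); replace (2 * (s / 2)) with s by field; repeat split; auto; lra.
  - destruct (finite_positive_lower_bound (map snd l)) as [eta [Heta Hlow]].
    exists eta; split; auto; intros x x' hx hx'; apply Rnot_lt_le; intro Hlt.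
    destruct (Hl x Logic.I) as [p [Hin [Hp [Hor Hx]]]].
    pose proof (Hlow (snd p) (in_map snd l p Hin) Hp).
    pose proof (dist_triangle Hd (fst p) x x').
    destruct Hor as [h|h]; [apply (h x) | apply (h x')]; auto; lra.
Qed.

End CompactMetric.

Definition oscillation_lt {X Y : Type} (dX : X -> X -> R) (dY : Y -> Y -> R)
  (f : X -> Y) (K : X -> Prop) (rho : R) : Prop :=
  exists eta, 0 < eta /\
    forall x x', K x -> K x' -> dX x x' < eta -> dY (f x) (f x') < rho.

Definition uniformly_continuous_on {X Y : Type} (dX : X -> X -> R) (dY : Y -> Y -> R)
  (f : X -> Y) (K : X -> Prop) : Prop :=
  forall rho, 0 < rho -> oscillation_lt dX dY f K rho.

Section Lusin.
Context {X Y : Type} {dX : X -> X -> R} (HdX : is_metric dX) (HcX : compact_space dX)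
  {mu : (X -> Prop) -> R} (Hmu : borel_prob dX mu)
  {dY : Y -> Y -> R} (HdY : is_metric dY) (HcY : compact_space dY)
  {Phi : X -> Y} (HPhi : borel_measurable dX dY Phi).

Lemma lusin_finite_net r (l : list Y) W : 0 < r -> borel dX W ->
  (forall x, W x -> exists y, In y l /\ dY y (Phi x) < r) ->
  forall g, 0 < g -> exists C, is_closed dX C /\ (forall x, C x -> W x) /\
    mu (fun x => W x /\ ~ C x) < g /\ oscillation_lt dX dY Phi C (2 * r).
Proof.
  intro Hr; revert W; induction l as [|y l IH]; intros W HW Hcov g Hg.
  - exists (fun _ => False); repeat split; [| tauto | | exists 1; split; [lra | tauto]].
    + intros x _; exists 1; split; [lra | tauto].
    + rewrite (set_fun_ext mu _ (fun _ => False)), (measure_empty Hmu); auto.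
      intro x; split; [intros [h _]; destruct (Hcov x h) as [? [[] _]] | tauto].
  - (* split [W] by the ball around [y] and separate the two closed pieces *)
    set (P := fun x => dY y (Phi x) < r).
    assert (HP : borel dX P) by apply (HPhi _ (borel_open _ (open_ball HdY y r))).
    destruct (closed_inner_regular HdX Hmu (fun x => W x /\ P x) ltac:(solve_borel) (g / 2))
      as [C1 [HC1 [HC1W Hm1]]]; [lra|].
    destruct (IH (fun x => W x /\ ~ P x) ltac:(solve_borel)) with (g := g / 2)
      as [C2 [HC2 [HC2W [Hm2 [eta2 [He2 Hosc2]]]]]]; [|lra|].
    { intros x [h1 h2]; destruct (Hcov x h1) as [z [[<-|Hz] Hd]]; [contradiction | eauto]. }
    destruct (closed_disjoint_separated HdX HcX C1 C2 HC1 HC2) as [eta1 [He1 Hsep]].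
    { intros x h1 h2; apply (proj2 (HC2W x h2)), HC1W, h1. }
    assert (Hb1 := closed_borel dX C1 HC1); assert (Hb2 := closed_borel dX C2 HC2).
    exists (fun x => C1 x \/ C2 x); split; [now apply closed_union|].
    split; [intros x [h|h]; [apply HC1W | apply HC2W]; auto|].
    split.
    + eapply Rle_lt_trans; [apply (measure_mono Hmu _
        (fun x => ((W x /\ P x) /\ ~ C1 x) \/ ((W x /\ ~ P x) /\ ~ C2 x))) |].
      * solve_borel.
      * solve_borel.
      * intros x [h1 h2]; destruct (classic (P x)); tauto.
      * eapply Rle_lt_trans; [apply (measure_union_le Hmu); solve_borel | lra].
    + exists (Rmin eta1 eta2); split; [now apply Rmin_glb_lt|].
      intros x x' hx hx' Hxx.
      pose proof (Rmin_l eta1 eta2); pose proof (Rmin_r eta1 eta2).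
      destruct hx as [hx|hx], hx' as [hx'|hx'].
      * assert (Px := proj2 (HC1W x hx)); assert (Px' := proj2 (HC1W x' hx')); unfold P in *.
        pose proof (dist_triangle HdY (Phi x) y (Phi x')).
        rewrite (dist_sym HdY (Phi x) y) in *; lra.
      * pose proof (Hsep x x' hx hx'); lra.
      * pose proof (Hsep x' x hx' hx) as Hs; rewrite (dist_sym HdX x' x) in Hs; lra.
      * apply Hosc2; auto; lra.
Qed.

Theorem lusin delta : 0 < delta -> exists K, is_closed dX K /\
  mu (fun x => ~ K x) <= delta /\ uniformly_continuous_on dX dY Phi K.
Proof.
  intro Hdel.
  destruct (choice (fun n C => is_closed dX C /\ mu (fun x => ~ C x) <= delta / 2 ^ S n /\
     oscillation_lt dX dY Phi C (2 * / INR (S n)))) as [K HK].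
  { intro n; assert (Hr : 0 < / INR (S n)) by (apply Rinv_0_lt_compat, lt_0_INR; lia).
    destruct (compact_finite_net HdY HcY _ Hr) as [l Hl].
    destruct (lusin_finite_net _ l (fun _ => True) Hr borel_True) with (g := delta / 2 ^ S n)
      as [C [HC [_ [Hm Hosc]]]].
    - intros x _; apply Hl.
    - apply Rdiv_lt_0_compat; [|apply pow_lt]; lra.
    - exists C; repeat split; auto.
      rewrite (set_fun_ext mu _ (fun x => True /\ ~ C x)) by (intro; tauto); lra. }
  exists (fun x => forall n, K n x); split; [apply closed_forall; intro; apply HK|]; split.
  - rewrite (set_fun_ext mu _ (fun x => exists n, ~ K n x))
      by (intro x; split; [apply not_all_ex_not | intros [n h] h'; auto]).
    apply (measure_union_geometric_le Hmu); intro n; [|apply HK].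
    apply borel_complement, closed_borel, HK.
  - intros rho Hrho; destruct (INR_unbounded (2 / rho)) as [n Hn].
    destruct (HK n) as [_ [_ [eta [He Hosc]]]]; exists eta; split; auto.
    intros x x' hx hx' Hxx; eapply Rlt_le_trans; [apply Hosc; auto|].
    assert (0 < INR (S n)) by (apply lt_0_INR; lia); rewrite S_INR in *.
    apply (Rmult_lt_compat_r rho) in Hn; auto; unfold Rdiv in Hn.
    rewrite Rmult_assoc, Rinv_l in Hn by lra.
    apply Rmult_le_reg_r with (INR n + 1); [lra|].
    rewrite Rmult_assoc, Rinv_l by lra; nra.
Qed.

End Lusin.

Lemma sumR_ext N (f g : nat -> R) : (forall k, f k = g k) -> sumR N f = sumR N g.
Proof. intro H; induction N; simpl; [|rewrite IHN, H]; reflexivity. Qed.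

Lemma sumR_plus N (f g : nat -> R) : sumR N (fun k => f k + g k) = sumR N f + sumR N g.
Proof. induction N; simpl; [|rewrite IHN]; ring. Qed.

Lemma sumR_scal N c (f : nat -> R) : sumR N (fun k => c * f k) = c * sumR N f.
Proof. induction N; simpl; [|rewrite IHN]; ring. Qed.

Lemma sumR_const N c : sumR N (fun _ => c) = INR N * c.
Proof. induction N; simpl sumR; [|rewrite IHN, S_INR]; simpl; ring. Qed.

Lemma sumR_le_termwise N (a b e e' : nat -> R) L c :
  (forall k, a k <= L * b k + c + e k + e' k) ->
  sumR N a <= L * sumR N b + INR N * c + sumR N e + sumR N e'.
Proof. intro H; induction N; simpl sumR; [simpl; lra | rewrite S_INR; specialize (H N); lra]. Qed.

Definition indicator {X : Type} (A : X -> Prop) (x : X) : R :=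
  if excluded_middle_informative (A x) then 1 else 0.

Lemma indicator_in {X : Type} (A : X -> Prop) x : A x -> indicator A x = 1.
Proof. unfold indicator; destruct (excluded_middle_informative (A x)); tauto. Qed.

Lemma indicator_out {X : Type} (A : X -> Prop) x : ~ A x -> indicator A x = 0.
Proof. unfold indicator; destruct (excluded_middle_informative (A x)); tauto. Qed.

Lemma indicator_bounds {X : Type} (A : X -> Prop) x : 0 <= indicator A x <= 1.
Proof. unfold indicator; destruct (excluded_middle_informative (A x)); lra. Qed.

Definition visits {X : Type} (B : nat -> X -> Prop) (N : nat) (x : X) : R :=
  sumR N (fun k => indicator (B k) x).

Lemma visits_S {X : Type} (B : nat -> X -> Prop) N c x :
  c < visits B (S N) x <->
  (B N x /\ c - 1 < visits B N x) \/ (~ B N x /\ c < visits B N x).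
Proof.
  unfold visits; simpl sumR.
  destruct (classic (B N x)) as [h|h];
    [rewrite indicator_in | rewrite indicator_out]; auto; split; intuition lra.
Qed.

Section Markov.
Context {X : Type} {d : X -> X -> R} {mu : (X -> Prop) -> R} (Hmu : borel_prob d mu)
  (B : nat -> X -> Prop) (HB : forall k, borel d (B k)).

Lemma borel_visits_gt N : forall c, borel d (fun x => c < visits B N x).
Proof.
  induction N as [|N IH]; intro c.
  - destruct (Rlt_le_dec c 0).
    + rewrite (pred_ext (fun x => c < visits B 0 x) (fun _ => True)); [solve_borel|].
      intro; unfold visits; simpl; intuition lra.
    + rewrite (pred_ext (fun x => c < visits B 0 x) (fun _ => False)); [solve_borel|].
      intro; unfold visits; simpl; intuition lra.
  - rewrite (pred_ext _ _ (fun x => visits_S B N c x)); solve_borel.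
Qed.

Lemma markov_visits N : forall W c, borel d W ->
  c * mu (fun x => W x /\ c < visits B N x) <= sumR N (fun k => mu (fun x => W x /\ B k x)).
Proof.
  induction N as [|N IH]; intros W c HW; simpl sumR.
  - destruct (Rlt_le_dec c 0).
    + pose proof (measure_nonneg Hmu (fun x => W x /\ c < visits B 0 x)
                    ltac:(pose proof (borel_visits_gt 0 c); solve_borel)); nra.
    + rewrite (set_fun_ext mu _ (fun _ => False)), (measure_empty Hmu)
        by (intro; unfold visits; simpl; lra); lra.
  -
    assert (HV := borel_visits_gt).
    set (WB := fun x => W x /\ B N x); set (WnB := fun x => W x /\ ~ B N x).
    rewrite (measure_split Hmu _ (B N)) by solve_borel.
    rewrite (set_fun_ext mu _ (fun x => WB x /\ c - 1 < visits B N x))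
      by (intro x; rewrite visits_S; unfold WB; tauto).
    rewrite (set_fun_ext mu (fun x => (W x /\ c < _) /\ ~ B N x)
               (fun x => WnB x /\ c < visits B N x))
      by (intro x; rewrite visits_S; unfold WnB; tauto).
    pose proof (IH WB (c - 1) ltac:(unfold WB; solve_borel)) as IH1.
    pose proof (IH WnB c ltac:(unfold WnB; solve_borel)) as IH2.
    rewrite (sumR_ext N _ (fun k => mu (fun x => WB x /\ B k x) + mu (fun x => WnB x /\ B k x))),
      sumR_plus.
    2: { intro k; rewrite (measure_split Hmu _ (B N)) by solve_borel.
         unfold WB, WnB; f_equal; apply set_fun_ext; intro; tauto. }
    pose proof (measure_mono Hmu (fun x => WB x /\ c - 1 < visits B N x) WB
                  ltac:(unfold WB; solve_borel) ltac:(unfold WB; solve_borel) ltac:(firstorder)).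
    pose proof (measure_nonneg Hmu (fun x => WB x /\ c - 1 < visits B N x)
                  ltac:(unfold WB; solve_borel)).
    replace (mu (fun x => W x /\ B N x)) with (mu WB) by reflexivity.
    nra.
Qed.

End Markov.

Lemma borel_preimage {X Y : Type} (dX : X -> X -> R) (dY : Y -> Y -> R) (f : X -> Y) A :
  continuous_on dX dY f (fun _ => True) -> borel dY A -> borel dX (fun x => A (f x)).
Proof.
  intros Hf HA F HF Ho; apply (HA (fun B => F (fun x => B (f x)))).
  - destruct HF as [H1 [H2 H3]]; split; [exact H1 | split]; intros B HB; [apply H2 | apply H3];
      exact HB.
  - intros U HU; apply Ho; intros x Hx.
    destruct (HU (f x) Hx) as [r [Hr Hball]], (Hf x Logic.I r Hr) as [e [He Hcont]].
    exists e; split; auto; intros y Hy; apply Hball, Hcont; auto.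
Qed.

Lemma measure_preserving_inverse {X : Type} (d : X -> X -> R) (mu : (X -> Prop) -> R)
  (T Tinv : X -> X) : continuous_on d d Tinv (fun _ => True) -> (forall x, Tinv (T x) = x) ->
  (forall A, borel d A -> mu (fun x => A (T x)) = mu A) ->
  forall A, borel d A -> mu (fun x => A (Tinv x)) = mu A.
Proof.
  intros Hc Hinv Hpres A HA.
  rewrite <- Hpres by (now apply (borel_preimage d d)).
  apply set_fun_ext; intro x; now rewrite Hinv.
Qed.

Definition orbit_good {X : Type} (f : X -> X) (A Z : X -> Prop) (a : R) (N : nat) (x : X)
  : Prop :=
  visits (fun k z => A (Nat.iter k f z)) N x <= a * INR N /\ forall k, ~ Z (Nat.iter k f x).

Section Orbits.
Context {X : Type} {d : X -> X -> R} {mu : (X -> Prop) -> R} (Hmu : borel_prob d mu)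
  (f : X -> X) (Hf : continuous_on d d f (fun _ => True))
  (Hpres : forall A, borel d A -> mu (fun x => A (f x)) = mu A).

Lemma borel_preimage_iter k A : borel d A -> borel d (fun x => A (Nat.iter k f x)).
Proof.
  revert A; induction k as [|k IH]; intros A HA; [exact HA|].
  apply (IH (fun y => A (f y))), (borel_preimage d d); auto.
Qed.

Lemma measure_preimage_iter k A : borel d A -> mu (fun x => A (Nat.iter k f x)) = mu A.
Proof.
  revert A; induction k as [|k IH]; intros A HA; [reflexivity|].
  simpl; rewrite (IH (fun y => A (f y))); [apply Hpres, HA | apply (borel_preimage d d); auto].
Qed.

Lemma orbit_frequency_markov A a N : borel d A -> 0 < a ->
  mu (fun x => a * INR N < visits (fun k z => A (Nat.iter k f z)) N x) <= mu A / a.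
Proof.
  intros HA Ha.
  set (B := fun k z => A (Nat.iter k f z)).
  assert (HB : forall k, borel d (B k)) by (intro; apply borel_preimage_iter, HA).
  assert (HmuA : 0 <= mu A) by apply (measure_nonneg Hmu _ HA).
  destruct N as [|N].
  - rewrite (set_fun_ext mu _ (fun _ => False)), (measure_empty Hmu)
      by (intro; unfold visits; simpl; intuition lra).
    apply Rle_mult_inv_pos; auto.
  - pose proof (markov_visits Hmu B HB (S N) (fun _ => True) (a * INR (S N)) borel_True)
      as Hmarkov.
    rewrite (set_fun_ext mu _ (fun x => a * INR (S N) < visits B (S N) x)) in Hmarkov
      by (intro; tauto).
    rewrite (sumR_ext _ _ (fun _ => mu A)), sumR_const in Hmarkov.
    2: { intro k; rewrite <- (measure_preimage_iter k A HA); apply set_fun_ext; firstorder. }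
    assert (HN : 0 < INR (S N)) by (apply lt_0_INR; lia).
    apply (Rmult_le_reg_l (a * INR (S N))); [nra|].
    unfold Rdiv; replace (a * INR (S N) * (mu A * / a)) with (INR (S N) * mu A)
      by (field; lra).
    exact Hmarkov.
Qed.

Lemma orbit_null_hits Z : borel d Z -> mu Z = 0 ->
  mu (fun x => exists k, Z (Nat.iter k f x)) = 0.
Proof.
  intros HZ HZ0; apply (measure_null_union Hmu (fun k x => Z (Nat.iter k f x))); intro k.
  - now apply borel_preimage_iter.
  - now rewrite measure_preimage_iter.
Qed.

Lemma orbit_good_large A Z a N : borel d A -> borel d Z -> mu Z = 0 -> 0 < a ->
  borel d (orbit_good f A Z a N) /\ mu (fun x => ~ orbit_good f A Z a N x) <= mu A / a.
Proof.
  intros HA HZ HZ0 Ha.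
  assert (Hvis := borel_visits_gt (fun k z => A (Nat.iter k f z))
                    (fun k => borel_preimage_iter k A HA) N (a * INR N)).
  assert (Hhit : forall k, borel d (fun x => Z (Nat.iter k f x)))
    by (intro; now apply borel_preimage_iter).
  assert (Hbad : (fun x => ~ orbit_good f A Z a N x) =
                 fun x => a * INR N < visits (fun k z => A (Nat.iter k f z)) N x \/
                          exists k, Z (Nat.iter k f x)).
  { apply pred_ext; intro x; unfold orbit_good; split.
    - intro Hnot; destruct (Rlt_le_dec (a * INR N) (visits (fun k z => A (Nat.iter k f z)) N x));
        [now left | right].
      apply NNPP; intro Hnohit; apply Hnot; split; [assumption|].
      intros k Hk; apply Hnohit; now exists k.
    - intros [h|[k h]] [h1 h2]; [lra | exact (h2 k h)]. }
  split.
  - apply borel_complement_inv; rewrite Hbad; solve_borel.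
  - rewrite Hbad; eapply Rle_trans; [apply (measure_union_le Hmu); solve_borel|].
    rewrite orbit_null_hits by auto.
    pose proof (orbit_frequency_markov A a N HA Ha); lra.
Qed.

End Orbits.

Lemma factor_iter {X Y : Type} (f : X -> X) (g : Y -> Y) (Phi : X -> Y) (Z : X -> Prop) :
  (forall x, ~ Z x -> Phi (f x) = g (Phi x)) ->
  forall x, (forall k, ~ Z (Nat.iter k f x)) ->
  forall k, Phi (Nat.iter k f x) = Nat.iter k g (Phi x).
Proof. intros Hf x Hx k; induction k; simpl; [|rewrite Hf, IHk]; auto. Qed.

Lemma factor_inverse {X Y : Type} (T Tinv : X -> X) (S Sinv : Y -> Y) (Phi : X -> Y)
  (Z : X -> Prop) : (forall x, ~ Z x -> Phi (T x) = S (Phi x)) ->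
  (forall x, T (Tinv x) = x) -> (forall y, Sinv (S y) = y) ->
  forall x, ~ Z (Tinv x) -> Phi (Tinv x) = Sinv (Phi x).
Proof. intros HZ HTTi HSiS x Hx; rewrite <- (HTTi x) at 2; now rewrite HZ, HSiS. Qed.

Lemma factor_iter_inverse {X Y : Type} (T Tinv : X -> X) (S Sinv : Y -> Y) (Phi : X -> Y)
  (Z : X -> Prop) : (forall x, ~ Z x -> Phi (T x) = S (Phi x)) ->
  (forall x, T (Tinv x) = x) -> (forall y, Sinv (S y) = y) ->
  forall x, (forall k, ~ Z (Tinv (Nat.iter k Tinv x))) ->
  forall k, Phi (Tinv (Nat.iter k Tinv x)) = Sinv (Nat.iter k Sinv (Phi x)).
Proof.
  intros HZ HTTi HSiS x Hx k.
  assert (Hinv := factor_inverse T Tinv S Sinv Phi Z HZ HTTi HSiS).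
  rewrite Hinv, (factor_iter Tinv Sinv Phi (fun z => Z (Tinv z)) Hinv x Hx); auto.
Qed.

(* the past window [[-N, 0)] runs along [Tinv^(k+1)], whence the shift by [Tinv] *)
Definition two_sided_good {X : Type} (T Tinv : X -> X) (K Z : X -> Prop) (a : R) (N : nat)
  (x : X) : Prop :=
  K x /\ orbit_good T (fun z => ~ K z) Z a N x /\
  orbit_good Tinv (fun z => ~ K (Tinv z)) (fun z => Z (Tinv z)) a N x.

Lemma two_sided_good_large {X : Type} (d : X -> X -> R) (mu : (X -> Prop) -> R)
  (T Tinv : X -> X) (K Z : X -> Prop) (a : R) (N : nat) :
  cmpp_system d mu T Tinv -> is_closed d K -> borel d Z -> mu Z = 0 -> 0 < a ->
  borel d (two_sided_good T Tinv K Z a N) /\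
  mu (fun x => ~ two_sided_good T Tinv K Z a N x) <= mu (fun x => ~ K x) * (1 + 2 / a).
Proof.
  intros [_ [_ [[HTc [HTic [HTiT _]]] [Hmu Hpres]]]] HK HZ HZ0 Ha.
  assert (HKb := closed_borel d K HK).
  assert (Hpres' := measure_preserving_inverse d mu T Tinv HTic HTiT Hpres).
  assert (HKinv : borel d (fun z => ~ K (Tinv z)))
    by (apply (borel_preimage d d Tinv (fun z => ~ K z)); auto; solve_borel).
  destruct (orbit_good_large Hmu T HTc Hpres (fun z => ~ K z) Z a N) as [HFb HFm];
    auto; [solve_borel|].
  destruct (orbit_good_large Hmu Tinv HTic Hpres' (fun z => ~ K (Tinv z)) (fun z => Z (Tinv z))
              a N) as [HPb HPm]; auto.
  { now apply (borel_preimage d d). }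
  { now rewrite Hpres'. }
  rewrite (Hpres' (fun z => ~ K z)) in HPm by solve_borel.
  unfold two_sided_good; split; [solve_borel|].
  eapply Rle_trans; [apply (measure_not_and_le Hmu); solve_borel|].
  eapply Rle_trans; [apply Rplus_le_compat_l, (measure_not_and_le Hmu); solve_borel|].
  unfold Rdiv in *; lra.
Qed.

Lemma almost_lipschitz_on_weaken {X Y : Type} (dX : X -> X -> R) (dY : Y -> Y -> R)
  (f : X -> Y) (K : X -> Prop) c c' L :
  c <= c' -> almost_lipschitz_on dX dY f K c L -> almost_lipschitz_on dX dY f K c' L.
Proof. intros Hc H x x' hx hx'; specialize (H x x' hx hx'); lra. Qed.

Section OrbitLipschitz.
Context {X Y : Type} {dX : X -> X -> R} (HdX : is_metric dX) {dY : Y -> Y -> R}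
  {Phi : X -> Y} (K : X -> Prop) (D eta rho : R)
  (HDb : forall y y', dY y y' <= D) (HD : 0 < D) (Heta : 0 < eta) (Hrho : 0 <= rho)
  (Hosc : forall x x', K x -> K x' -> dX x x' < eta -> dY (Phi x) (Phi x') < rho).

(* far-apart points pay [D] through the Lipschitz term, points off [K] through [D] *)
Lemma dist_image_le u u' :
  dY (Phi u) (Phi u') <=
  D / eta * dX u u' + rho +
  D * indicator (fun z => ~ K z) u + D * indicator (fun z => ~ K z) u'.
Proof.
  assert (HL : 0 <= D / eta * dX u u')
    by (apply Rmult_le_pos; [apply Rlt_le, Rdiv_lt_0_compat | apply (dist_nonneg HdX)]; auto).
  pose proof (indicator_bounds (fun z => ~ K z) u).
  pose proof (indicator_bounds (fun z => ~ K z) u').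
  pose proof (HDb (Phi u) (Phi u')).
  destruct (classic (K u)) as [h|h]; [|rewrite indicator_in by auto; nra].
  destruct (classic (K u')) as [h'|h']; [|rewrite (indicator_in _ u') by auto; nra].
  rewrite !indicator_out by auto.
  destruct (Rlt_le_dec (dX u u') eta) as [hl|hl]; [pose proof (Hosc u u' h h' hl); lra|].
  enough (D <= D / eta * dX u u') by lra.
  unfold Rdiv; rewrite Rmult_assoc; rewrite <- (Rmult_1_r D) at 1.
  apply Rmult_le_compat_l; [lra|].
  apply (Rmult_le_reg_l eta); [auto | rewrite <- Rmult_assoc, Rinv_r; lra].
Qed.

Lemma orbit_almost_lipschitz (orbX : nat -> X -> X) (orbY : nat -> Y -> Y) (X0 : X -> Prop)
  (a : R) (N : nat) :
  (forall x, X0 x -> forall k, Phi (orbX k x) = orbY k (Phi x)) ->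
  (forall x, X0 x -> visits (fun k z => ~ K (orbX k z)) N x <= a * INR N) ->
  almost_lipschitz_on (fun x x' => sumR N (fun k => dX (orbX k x) (orbX k x')))
    (fun y y' => sumR N (fun k => dY (orbY k y) (orbY k y'))) Phi X0
    ((rho + 2 * D * a) * INR N) (D / eta).
Proof.
  intros Hequiv Hvis x x' hx hx'; simpl.
  rewrite (sumR_ext _ _ (fun k => dY (Phi (orbX k x)) (Phi (orbX k x'))))
    by (intro k; now rewrite !Hequiv).
  eapply Rle_trans; [apply sumR_le_termwise; intro k; apply dist_image_le|].
  rewrite !sumR_scal.
  pose proof (Rmult_le_compat_l D _ _ (Rlt_le _ _ HD) (Hvis x hx)).
  pose proof (Rmult_le_compat_l D _ _ (Rlt_le _ _ HD) (Hvis x' hx')).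
  unfold visits, indicator in *; lra.
Qed.

Context (T Tinv : X -> X) (S Sinv : Y -> Y) (Z : X -> Prop)
  (HZ : forall x, ~ Z x -> Phi (T x) = S (Phi x))
  (HTTi : forall x, T (Tinv x) = x) (HSiS : forall y, Sinv (S y) = y).

Lemma two_sided_good_almost_lipschitz X0 a N :
  (forall x, X0 x -> two_sided_good T Tinv K Z a N x) ->
  almost_lipschitz_on (d_past dX Tinv N) (d_past dY Sinv N) Phi X0
    ((rho + 2 * D * a) * INR N) (D / eta) /\
  almost_lipschitz_on (d_future dX T N) (d_future dY S N) Phi X0
    ((rho + 2 * D * a) * INR N) (D / eta).
Proof.
  intro HX0G; split.
  - apply (orbit_almost_lipschitz (fun k z => Tinv (Nat.iter k Tinv z))
             (fun k y => Sinv (Nat.iter k Sinv y))); intros x hx; [|apply HX0G, hx].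
    apply (factor_iter_inverse T Tinv S Sinv Phi Z HZ HTTi HSiS), HX0G, hx.
  - apply (orbit_almost_lipschitz (fun k => Nat.iter k T) (fun k => Nat.iter k S));
      intros x hx; [|apply HX0G, hx].
    apply (factor_iter T S Phi Z HZ), HX0G, hx.
Qed.

End OrbitLipschitz.

Lemma uniformly_continuous_on_continuous_on {X Y : Type} (dX : X -> X -> R)
  (dY : Y -> Y -> R) (f : X -> Y) (K X0 : X -> Prop) :
  (forall x, X0 x -> K x) -> uniformly_continuous_on dX dY f K -> continuous_on dX dY f X0.
Proof.
  intros Hsub Huc x hx rho Hrho; destruct (Huc rho Hrho) as [e [He Hc]].
  exists e; split; auto; intros y hy; apply Hc; auto.
Qed.

Lemma measure_inner_subset_large {X : Type} (d : X -> X -> R) (mu : (X -> Prop) -> R)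
  (G X0 : X -> Prop) e1 e2 : borel_prob d mu -> borel d G -> borel d X0 ->
  (forall x, X0 x -> G x) -> mu (fun x => ~ G x) <= e1 ->
  mu (fun x => G x /\ ~ X0 x) < e2 -> mu X0 > 1 - e1 - e2.
Proof.
  intros Hmu HG HX0 Hsub HGc HX0G.
  rewrite (measure_complement Hmu) in HGc by auto.
  rewrite (measure_diff Hmu) in HX0G by auto; lra.
Qed.

Theorem mainTheorem5
  (X Y : Type) (dX : X -> X -> R) (mu : (X -> Prop) -> R) (T Tinv : X -> X)
  (dY : Y -> Y -> R) (nu : (Y -> Prop) -> R) (S Sinv : Y -> Y) (Phi : X -> Y)
  (HX : cmpp_system dX mu T Tinv) (HY : cmpp_system dY nu S Sinv)
  (HPhi : borel_factor_map dX mu T dY nu S Phi)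
  (eps : R) (Heps : 0 < eps) :
  exists L : R, exists N0 : nat, forall N : nat, (N0 <= N)%nat ->
    exists X0 : X -> Prop,
      is_compact dX X0 /\ mu X0 > 1 - eps /\
      continuous_on dX dY Phi X0 /\
      almost_lipschitz_on (d_past dX Tinv N) (d_past dY Sinv N) Phi X0 (eps * INR N) L /\
      almost_lipschitz_on (d_future dX T N) (d_future dY S N) Phi X0 (eps * INR N) L.
Proof.
  pose proof HX as [HdX [HcX [[_ [_ [_ HTTi]]] [Hmu _]]]].
  destruct HY as [HdY [HcY [[_ [_ [HSiS _]]] _]]].
  destruct HPhi as [HPm [[Z [HZb [HZ0 HZ]]] _]].
  destruct (compact_bounded HdY HcY) as [D [HD HDb]].
  set (a := eps / (4 * D)); assert (Ha : 0 < a) by (apply Rdiv_lt_0_compat; lra).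
  set (delta := eps * a / (2 * (a + 2))).
  assert (Hdelta : delta * (1 + 2 / a) = eps / 2) by (unfold delta; field; lra).
  destruct (lusin HdX HcX Hmu HdY HcY HPm delta) as [K [HK [HKm HKuc]]];
    [apply Rdiv_lt_0_compat; nra|].
  destruct (HKuc (eps / 4)) as [eta [Heta Hosc]]; [lra|].
  exists (D / eta), O; intros N _.
  destruct (two_sided_good_large dX mu T Tinv K Z a N HX HK HZb HZ0 Ha) as [HGb HGm].
  destruct (closed_inner_regular HdX Hmu _ HGb (eps / 2)) as [X0 [HX0 [HX0G HX0m]]]; [lra|].
  assert (Hc : (eps / 4 + 2 * D * a) * INR N <= eps * INR N)
    by (pose proof (pos_INR N); unfold a; apply Rmult_le_compat_r; [|field_simplify]; lra).
  pose proof (Rmult_le_compat_r (1 + 2 / a) _ _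
                ltac:(pose proof (Rdiv_lt_0_compat 2 a ltac:(lra) Ha); lra) HKm).
  destruct (two_sided_good_almost_lipschitz HdX K D eta (eps / 4) HDb HD Heta ltac:(lra) Hosc
              T Tinv S Sinv Z HZ HTTi HSiS X0 a N HX0G) as [Hpast Hfuture].
  exists X0; repeat split.
  - now apply compact_closed.
  - enough (mu X0 > 1 - eps / 2 - eps / 2) by lra.
    apply (measure_inner_subset_large dX mu _ _ _ _ Hmu HGb); auto; [|lra].
    now apply closed_borel.
  - apply (uniformly_continuous_on_continuous_on dX dY Phi K); [apply HX0G | exact HKuc].
  - exact (almost_lipschitz_on_weaken _ _ _ _ _ _ _ Hc Hpast).
  - exact (almost_lipschitz_on_weaken _ _ _ _ _ _ _ Hc Hfuture).
Qed.
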